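(* Let $\gamma\in(0,1)$ and $c\ge0$. Define the deterministic sequence $\bar v^0=0$ and, for $n\ge1$, $\bar v^n=(1-\tfrac1n)\bar v^{n-1}+\tfrac1n(c+\gamma\bar v^{n-1})$. Extend it to real arguments $x\ge0$ by linear interpolation: $\bar v(x)=\bar v^{\lfloor x\rfloor}+(x-\lfloor x\rfloor)(\bar v^{\lceil x\rceil}-\bar v^{\lfloor x\rfloor})$. Fix any real $n_0>0$ and let $$b=n_0^{1-\gamma}\Big[1-\frac{1-\gamma}{n_0\gamma}-\frac{1-\gamma}{c}\,\bar v(n_0)\Big].$$ Then for all real $n\ge n_0$, $$\bar v(n)\ \le\ \frac{c}{1-\gamma}\Big[1-b\,n^{-(1-\gamma)}-\frac{1-\gamma}{\gamma}\cdot\frac1n\Big].$$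
   Context: This concerns approximate value iteration with stepsize $1/n$ for a single-state, single-action problem with deterministic reward $c$ and discount factor $\gamma$. *)

From Stdlib Require Import Reals Lra.
Open Scope R_scope.

Fixpoint vbar_seq (gamma c : R) (n : nat) : R :=
  match n with
  | O => 0
  | S k => (1 - / INR (S k)) * vbar_seq gamma c k
           + / INR (S k) * (c + gamma * vbar_seq gamma c k)
  end.

Definition rfloor (x : R) : Z := Int_part x.   (* Int_part x = up x - 1 = floor x *)
Definition rceil (x : R) : Z := (- Int_part (- x))%Z.

Definition vbar (gamma c x : R) : R :=
  let lo := vbar_seq gamma c (Z.to_nat (rfloor x)) in
  let hi := vbar_seq gamma c (Z.to_nat (rceil x)) in
  lo + (x - IZR (rfloor x)) * (hi - lo).

Definition bconst (gamma c n0 : R) : R :=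
  Rpower n0 (1 - gamma) *
  (1 - (1 - gamma) / (n0 * gamma) - (1 - gamma) / c * vbar gamma c n0).

(* Write [a = 1 - gamma].  Solving the recursion gives
   [vbar_seq k = c/a (1 - w_k)] with [w_k = prod_{j <= k} (1 - a/j)].  Since
   [b = bfun n0] for [bfun x = x^a (1 - (a/c) vbar x) - (a/gamma) x^(a-1)], the
   claim is exactly [bfun n0 <= bfun n].  On [[k, k+1]] the factor
   [1 - (a/c) vbar x] is the affine interpolation [w_k (1 - a (x - k)/(k+1))] of
   [w_k] and [w_(k+1)], and there the derivative of [bfun] is [a x^(a-2)] times a
   quantity that is nonnegative because [w_k <= 1]; hence [bfun] is
   nondecreasing. *)
From Stdlib Require Import Reals Lra Lia ZArith.
From Coquelicot Require Import Coquelicot.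
Open Scope R_scope.

Fixpoint prod_one_sub_div (a : R) (k : nat) : R :=
  match k with
  | O => 1
  | S j => (1 - a / INR (S j)) * prod_one_sub_div a j
  end.

Lemma prod_one_sub_div_bounds (a : R) (k : nat) :
  0 <= a <= 1 -> 0 <= prod_one_sub_div a k <= 1.
Proof.
  intros Ha; induction k as [|k IH]; cbn [prod_one_sub_div]; [lra|].
  assert (Hk : 1 <= INR (S k)) by (rewrite S_INR; pose proof (pos_INR k); lra).
  assert (0 <= a / INR (S k) <= 1).
  { split; [apply Rdiv_le_0_compat; lra|].
    apply (Rdiv_le_1 a (INR (S k))); lra. }
  split; nra.
Qed.

Lemma vbar_seq_eq (gamma c : R) (k : nat) : gamma <> 1 ->
  vbar_seq gamma c k = c / (1 - gamma) * (1 - prod_one_sub_div (1 - gamma) k).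
Proof.
  intros Hg; induction k as [|k IH]; cbn [vbar_seq prod_one_sub_div].
  - field; lra.
  - rewrite IH.
    assert (0 < INR (S k)) by apply lt_0_INR, Nat.lt_0_succ.
    field; lra.
Qed.

Lemma rfloor_eq (k : nat) (x : R) : INR k <= x < INR k + 1 -> rfloor x = Z.of_nat k.
Proof.
  intros [H1 H2]; unfold rfloor, Int_part.
  rewrite <- (up_tech x (Z.of_nat k)); [lia | |].
  - rewrite <- INR_IZR_INZ; lra.
  - rewrite plus_IZR, <- INR_IZR_INZ; simpl; lra.
Qed.

Lemma rceil_eq (k : nat) (x : R) : INR k - 1 < x <= INR k -> rceil x = Z.of_nat k.
Proof.
  intros [H1 H2]; unfold rceil, Int_part.
  rewrite <- (up_tech (- x) (- Z.of_nat k)); [lia | |].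
  - rewrite opp_IZR, <- INR_IZR_INZ; lra.
  - rewrite plus_IZR, opp_IZR, <- INR_IZR_INZ; simpl; lra.
Qed.

Lemma vbar_interp (gamma c : R) (k : nat) (x : R) :
  INR k <= x <= INR k + 1 ->
  vbar gamma c x = vbar_seq gamma c k
     + (x - INR k) * (vbar_seq gamma c (S k) - vbar_seq gamma c k).
Proof.
  intros Hx; unfold vbar.
  pose proof (S_INR k) as HSk.
  destruct (Req_dec x (INR k + 1)) as [Etop | Ntop].
  - rewrite (rfloor_eq (S k)), (rceil_eq (S k)) by lra.
    rewrite Nat2Z.id, <- INR_IZR_INZ, Etop, HSk; ring.
  - rewrite (rfloor_eq k) by lra; rewrite Nat2Z.id, <- INR_IZR_INZ.
    destruct (Req_dec x (INR k)) as [Ebot | Nbot].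
    + rewrite (rceil_eq k) by lra; rewrite Nat2Z.id, Ebot; ring.
    + rewrite (rceil_eq (S k)) by lra; rewrite Nat2Z.id; ring.
Qed.

Lemma nondecreasing_of_derive_nonneg (f f' : R -> R) (x y : R) :
  x <= y ->
  (forall t, x <= t <= y -> derivable_pt_lim f t (f' t)) ->
  (forall t, x <= t <= y -> 0 <= f' t) ->
  f x <= f y.
Proof.
  intros Hxy Hder Hpos.
  destruct (Req_dec x y) as [-> | Nxy]; [lra|].
  destruct (MVT_cor2 f f' x y) as [t [Ht Hint]]; [lra | exact Hder |].
  assert (0 <= f' t * (y - x)) by (apply Rmult_le_pos; [apply Hpos |]; lra).
  lra.
Qed.

Lemma Rpower_sub_one (x e : R) : 0 < x -> Rpower x (e - 1) = Rpower x e / x.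
Proof.
  intros Hx; unfold Rpower.
  replace (e * ln x) with ((e - 1) * ln x + ln x) by ring.
  rewrite exp_plus, exp_ln by exact Hx; field; lra.
Qed.

Section Monotonicity.

Variable gamma : R.
Hypothesis gamma_range : 0 < gamma < 1.

Let a := 1 - gamma.

Definition bfun (c x : R) : R :=
  Rpower x a * (1 - a / c * vbar gamma c x) - a / gamma * Rpower x (a - 1).

(* [bfun] on [[K, K+1]], where [1 - (a/c) vbar] is affine with value [w] at [K]. *)
Definition bpiece (w K x : R) : R :=
  Rpower x a * (w * (1 - a * (x - K) / (K + 1))) - a / gamma * Rpower x (a - 1).

Lemma derivable_pt_lim_bpiece (w K x : R) : 0 < x -> 0 < K + 1 ->
  derivable_pt_lim (bpiece w K) x
    (a * Rpower x (a - 2) *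
       (x * (w * (1 - a * (x - K) / (K + 1))) - x * x * w / (K + 1) + 1)).
Proof.
  intros Hx HK.
  apply is_derive_Reals; unfold bpiece, Rpower.
  auto_derive; [lra|].
  replace (a * ln x) with ((a - 2) * ln x + ln x + ln x) by ring.
  replace ((a - 1) * ln x) with ((a - 2) * ln x + ln x) by ring.
  rewrite !exp_plus, exp_ln by exact Hx.
  unfold a; field; lra.
Qed.

Lemma interp_bracket_nonneg (w K t : R) :
  0 <= w <= 1 -> 0 <= K <= t -> t <= K + 1 ->
  0 <= t * (w * (1 - a * (t - K) / (K + 1))) - t * t * w / (K + 1) + 1.
Proof.
  intros Hw HK Ht.
  assert (Ha : 0 <= a <= 1) by (unfold a; lra).
  replace (t * (w * (1 - a * (t - K) / (K + 1))) - t * t * w / (K + 1) + 1)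
    with (((1 + a) * (t * w) * (K + 1 - t) + (1 - a) * (t * w) + (K + 1 - t * w))
          / (K + 1)) by (field; lra).
  assert (Htw : 0 <= t * w <= K + 1) by (split; nra).
  assert (0 <= (1 + a) * (t * w)) by nra.
  apply Rdiv_le_0_compat; nra.
Qed.

Lemma bpiece_mono (w K x y : R) : 0 <= w <= 1 -> 0 <= K ->
  0 < x -> K <= x -> x <= y -> y <= K + 1 ->
  bpiece w K x <= bpiece w K y.
Proof.
  intros Hw HK Hx HKx Hxy Hy.
  eapply nondecreasing_of_derive_nonneg; [exact Hxy | |].
  - intros t Ht; apply derivable_pt_lim_bpiece; lra.
  - intros t Ht; cbv beta.
    apply Rmult_le_pos; [| apply interp_bracket_nonneg; lra].
    apply Rmult_le_pos; [unfold a; lra | apply Rlt_le, exp_pos].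
Qed.

Lemma bfun_eq_bpiece (c : R) (k : nat) (x : R) : c <> 0 ->
  INR k <= x <= INR k + 1 ->
  bfun c x = bpiece (prod_one_sub_div a k) (INR k) x.
Proof.
  intros Hc Hx; unfold bfun, bpiece.
  rewrite (vbar_interp gamma c k x Hx), !vbar_seq_eq by lra.
  cbn [prod_one_sub_div]; fold a.
  rewrite S_INR; pose proof (pos_INR k).
  field; unfold a; lra.
Qed.

Lemma bfun_nondecreasing (c x y : R) : c <> 0 -> 0 < x -> x <= y -> bfun c x <= bfun c y.
Proof.
  intros Hc Hx Hxy.
  assert (Hw : forall k, 0 <= prod_one_sub_div a k <= 1)
    by (intros; apply prod_one_sub_div_bounds; unfold a; lra).
  enough (Hupto : forall (N : nat) (u v : R), 0 < u -> u <= v -> v <= INR N ->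
                    bfun c u <= bfun c v).
  { destruct (INR_unbounded y) as [N HN]; apply (Hupto N); lra. }
  induction N as [|N IH]; intros u v Hu Huv HvN; [simpl in HvN; lra|].
  rewrite S_INR in HvN; pose proof (pos_INR N).
  destruct (Rle_dec v (INR N)) as [HvN' | HvN']; [now apply IH|].
  rewrite (bfun_eq_bpiece c N v) by lra.
  destruct (Rle_dec (INR N) u) as [HNu | HNu].
  - rewrite (bfun_eq_bpiece c N u) by lra.
    apply bpiece_mono; auto; lra.
  - apply Rle_trans with (bfun c (INR N)); [apply IH; lra|].
    rewrite (bfun_eq_bpiece c N (INR N)) by lra.
    apply bpiece_mono; auto; lra.
Qed.

Lemma bconst_eq_bfun (c n0 : R) : 0 < n0 -> bconst gamma c n0 = bfun c n0.
Proof.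
  intros Hn0; unfold bconst, bfun; fold a.
  rewrite Rpower_sub_one by exact Hn0.
  unfold Rdiv; rewrite Rinv_mult; ring.
Qed.

Lemma vbar_eq_bfun (c n : R) : c <> 0 -> 0 < n ->
  vbar gamma c n = c / a * (1 - bfun c n * Rpower n (- a) - a / gamma * (1 / n)).
Proof.
  intros Hc Hn; unfold bfun.
  rewrite Rpower_sub_one, Rpower_Ropp by exact Hn.
  assert (0 < Rpower n a) by apply exp_pos.
  field; unfold a in *; repeat split; lra.
Qed.

End Monotonicity.

Theorem theorem6 (gamma c n0 : R) :
  0 < gamma < 1 -> 0 <= c -> 0 < n0 ->
  forall n : R, n0 <= n ->
    vbar gamma c n <=
      c / (1 - gamma) *
      (1 - bconst gamma c n0 * Rpower n (- (1 - gamma))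
         - (1 - gamma) / gamma * (1 / n)).
Proof.
  intros Hg Hc Hn0 n Hn.
  destruct (Req_dec c 0) as [-> | Hc0].
  - unfold vbar; rewrite !vbar_seq_eq by lra.
    unfold Rdiv; rewrite !Rmult_0_l; lra.
  - rewrite (vbar_eq_bfun gamma Hg c n Hc0) by lra.
    rewrite (bconst_eq_bfun gamma c n0 Hn0).
    apply Rmult_le_compat_l; [apply Rdiv_le_0_compat; lra|].
    assert (Hb : bfun gamma c n0 <= bfun gamma c n)
      by (apply bfun_nondecreasing; lra).
    assert (0 < Rpower n (- (1 - gamma))) by apply exp_pos.
    nra.
Qed.
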